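(* Suppose $c\ge2\tau^2$. For every $t\ge0$, let $s(t)$ be the largest multiple of $\tau$ with $s(t)\le t$. Then the FedSPS iterates satisfy (pathwise) $$R_t:=\frac1n\sum_{i=1}^n\|\bar x_t-x_t^i\|^2\le\frac1{2n\tau}\sum_{i=1}^n\sum_{j=s(t)}^{t-1}\gamma_j^i\big[F_i(x_j^i,\xi_j^i)-\ell_i^\star\big]$$ (the sum over $j$ being empty, and $R_t=0$, when $t=s(t)$).
   Context: For each $i\in[n]$, $\mathcal D_i$ is a probability distribution on $\Omega_i$, $F_i:\mathbb R^d\times\Omega_i\to\mathbb R$ with $F_i(\cdot,\xi)$ differentiable for $\xi\in\operatorname{supp}(\mathcal D_i)$; $F_i^\star:=\inf_{\xi\in\operatorname{supp}(\mathcal D_i),x}F_i(x,\xi)$ and $\ell_i^\star\le F_i^\star$ are given reals. FedSPS with parameters $c,\gamma_b>0$ and communication period integer $\tau\ge1$: $x_0^i=x_0$; at each $t$, client $i$ draws $\xi_t^i\sim\mathcal D_i$, sets $g_t^i:=\nabla F_i(x_t^i,\xi_t^i)$, $\gamma_t^i:=\min\{\frac{F_i(x_t^i,\xi_t^i)-\ell_i^\star}{c\|g_t^i\|^2},\gamma_b\}$ (first term $+\infty$ if $g_t^i=0$); if $t+1$ is a multiple of $\tau$, $x_{t+1}^i:=\frac1n\sum_j(x_t^j-\gamma_t^jg_t^j)$ for all $i$, else $x_{t+1}^i:=x_t^i-\gamma_t^ig_t^i$. $\bar x_t:=\frac1n\sum_ix_t^i$. *)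

From HB Require Import structures.
From mathcomp Require Import all_boot all_order all_algebra.
From mathcomp Require Import all_classical all_reals all_analysis.
Set Implicit Arguments. Unset Strict Implicit. Unset Printing Implicit Defensive.
Import Order.TTheory GRing.Theory Num.Theory.
Import numFieldNormedType.Exports.
Local Open Scope ring_scope.

Section FedSPS.
Variables (R : realType) (d n : nat).

Definition sqnorm (v : 'rV[R]_d) : R := \sum_(k < d) v ord0 k ^+ 2.

Definition grad (f : 'rV[R]_d -> R) (x : 'rV[R]_d) : 'rV[R]_d :=
  \row_(k < d) derive f x (delta_mx ord0 k : 'rV[R]_d).

(* Polyak-type step size  min{(Fv - l)/(c ||g||^2), gb}, first term +oo if g = 0 *)
Definition sps_step (c gb Fv l : R) (g : 'rV[R]_d) : R :=
  if sqnorm g == 0 then gb else Num.min ((Fv - l) / (c * sqnorm g)) gb.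

Variables (Omega : 'I_n -> Type)
  (F : forall i : 'I_n, 'rV[R]_d -> Omega i -> R)
  (lstar : 'I_n -> R) (c gb : R) (tau : nat) (x0 : 'rV[R]_d)
  (xi : nat -> forall i : 'I_n, Omega i).

Definition fed_g (t : nat) (i : 'I_n) (x : 'rV[R]_d) : 'rV[R]_d :=
  grad (fun y => F y (xi t i)) x.
Definition fed_gamma (t : nat) (i : 'I_n) (x : 'rV[R]_d) : R :=
  sps_step c gb (F x (xi t i)) (lstar i) (fed_g t i x).

Fixpoint fedsps (t : nat) : 'I_n -> 'rV[R]_d :=
  match t with
  | 0 => fun _ => x0
  | t'.+1 =>
    let y := fun i => fedsps t' i - fed_gamma t' i (fedsps t' i) *: fed_g t' i (fedsps t' i) in
    if (tau %| t'.+1)%N then fun _ => n%:R^-1 *: \sum_(j < n) y j else y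
  end.

Definition fedsps_gamma (t : nat) (i : 'I_n) : R := fed_gamma t i (fedsps t i).

Definition fedsps_avg (t : nat) : 'rV[R]_d := n%:R^-1 *: \sum_(i < n) fedsps t i.

End FedSPS.

From HB Require Import structures.
From mathcomp Require Import all_boot all_order all_algebra.
From mathcomp Require Import all_classical all_reals all_analysis.
From mathcomp Require Import ring.
Import Order.TTheory GRing.Theory Num.Theory.
Import numFieldNormedType.Exports.
Local Open Scope ring_scope.

(* Let s be the last communication round before t.  At round s all clients
   hold the same point z, and between s and t each client only makes local
   SPS steps, so x_t^i = z - u_i with u_i = sum_{s<=j<t} gamma_j^i g_j^i.
   The argument has three ingredients, proved first in general form:
   - the mean minimises the sum of squared distances, hence
     sum_i ||xbar_t - x_t^i||^2 <= sum_i ||z - x_t^i||^2 = sum_i ||u_i||^2;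
   - Cauchy-Schwarz: ||sum of K vectors||^2 <= K * sum of squared norms;
   - the SPS step satisfies gamma^2 ||g||^2 <= gamma (F - l) / c.
   Together: ||u_i||^2 <= (t - s)/c * sum_j gamma_j^i (F_i - lstar_i), and
   (t - s)/c <= tau/(2 tau^2) = 1/(2 tau) because t - s < tau <= c/(2 tau). *)

Lemma sqr_sum_le_card (R : realFieldType) (m k : nat) (b : nat -> R) :
  (\sum_(m <= j < k) b j) ^+ 2 <= (k - m)%:R * \sum_(m <= j < k) b j ^+ 2.
Proof.
set S := \sum_(m <= j < k) b j; set Q := \sum_(m <= j < k) b j ^+ 2.
have pairs_ge0 :
    0 <= \sum_(m <= j < k) \sum_(m <= l < k) (b j ^+ 2 + b l ^+ 2 - 2 * (b j * b l)).
  apply: sumr_ge0 => j _; apply: sumr_ge0 => l _.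
  have -> : b j ^+ 2 + b l ^+ 2 - 2 * (b j * b l) = (b j - b l) ^+ 2 by ring.
  exact: sqr_ge0.
have pairs_eq : \sum_(m <= j < k) \sum_(m <= l < k)
    (b j ^+ 2 + b l ^+ 2 - 2 * (b j * b l)) = 2 * ((k - m)%:R * Q - S ^+ 2).
  rewrite (eq_bigr (fun j => b j ^+ 2 * (k - m)%:R + Q - 2 * b j * S)); last first.
    by move=> j _; rewrite sumrB big_split /= sumr_const_nat mulr_natr -!mulr_sumr mulrA.
  rewrite sumrB big_split /= -!mulr_suml sumr_const_nat -mulr_natl.
  by rewrite -/Q -mulr_sumr -/S -mulr_natr; ring.
by rewrite pairs_eq pmulr_rge0 // subr_ge0 in pairs_ge0.
Qed.

Lemma sum_sqr_dev_mean_le (R : realFieldType) (n : nat) (a : 'I_n -> R) (b : R) :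
  (0 < n)%N ->
  \sum_(i < n) (n%:R^-1 * \sum_(j < n) a j - a i) ^+ 2
    <= \sum_(i < n) (b - a i) ^+ 2.
Proof.
move=> n_gt0; set S := \sum_(j < n) a j; set m := n%:R^-1 * S.
have S_eq : S = n%:R * m by rewrite /m mulrA mulfV ?mul1r // pnatr_eq0 -lt0n.
have expand e : \sum_(i < n) (e - a i) ^+ 2
    = n%:R * e ^+ 2 - 2 * e * S + \sum_(i < n) a i ^+ 2.
  rewrite (eq_bigr (fun i => e ^+ 2 - 2 * e * a i + a i ^+ 2)); last by move=> i _; ring.
  by rewrite !big_split /= sumrN sumr_const card_ord -mulr_sumr -[e ^+ 2 *+ n]mulr_natl.
rewrite !expand lerD2r S_eq.
have -> : n%:R * b ^+ 2 - 2 * b * (n%:R * m)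
    = n%:R * (b - m) ^+ 2 + (n%:R * m ^+ 2 - 2 * m * (n%:R * m)) by ring.
by rewrite lerDr mulr_ge0 ?ler0n ?sqr_ge0.
Qed.

Section SquaredNorm.
Context {R : realType} {d : nat}.

Lemma sqnorm_ge0 (v : 'rV[R]_d) : 0 <= sqnorm v.
Proof. by apply: sumr_ge0 => k _; exact: sqr_ge0. Qed.

Lemma sqnorm_sum_le (m k : nat) (v : nat -> 'rV[R]_d) :
  sqnorm (\sum_(m <= j < k) v j) <= (k - m)%:R * \sum_(m <= j < k) sqnorm (v j).
Proof.
rewrite /sqnorm exchange_big /= mulr_sumr; apply: ler_sum => k' _.
by rewrite summxE; exact: sqr_sum_le_card.
Qed.

Lemma sum_sqnorm_dev_mean_le (n : nat) (v : 'I_n -> 'rV[R]_d) (w : 'rV[R]_d) :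
  (0 < n)%N ->
  \sum_(i < n) sqnorm (n%:R^-1 *: \sum_(j < n) v j - v i)
    <= \sum_(i < n) sqnorm (w - v i).
Proof.
move=> n_gt0; rewrite /sqnorm exchange_big [leRHS]exchange_big /=.
apply: ler_sum => k _.
under eq_bigr => i _ do rewrite !mxE summxE.
under [leRHS]eq_bigr => i _ do rewrite !mxE.
exact: sum_sqr_dev_mean_le.
Qed.

End SquaredNorm.

Section PolyakStep.
Context {R : realType} {d : nat} {c gb : R}.
Hypotheses (c_gt0 : 0 < c) (gb_gt0 : 0 < gb).

Lemma sps_step_ge0 (Fv l : R) (g : 'rV[R]_d) :
  l <= Fv -> 0 <= sps_step c gb Fv l g.
Proof.
move=> l_le; rewrite /sps_step; case: eqP => _; first exact: ltW.
rewrite le_min (ltW gb_gt0) andbT divr_ge0 ?subr_ge0 //.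
by rewrite mulr_ge0 ?sqnorm_ge0 // ltW.
Qed.

(* The defining property of the Polyak step, gamma ||g||^2 <= (F - l) / c,
   multiplied by gamma >= 0 (when g = 0 the left-hand side vanishes). *)
Lemma sps_step_sq_le (Fv l : R) (g : 'rV[R]_d) : l <= Fv ->
  sps_step c gb Fv l g ^+ 2 * sqnorm g <= sps_step c gb Fv l g * (Fv - l) / c.
Proof.
move=> l_le; have gam_ge0 := sps_step_ge0 Fv l g l_le.
have gap_ge0 : 0 <= Fv - l by rewrite subr_ge0.
rewrite expr2 -!mulrA ler_wpM2l //.
move: gam_ge0; rewrite /sps_step; case: eqP => [-> _|/eqP q_neq0 _].
  by rewrite mulr0 divr_ge0 // ltW.
have q_gt0 : 0 < sqnorm g by rewrite lt_def q_neq0 sqnorm_ge0.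
by rewrite -ler_pdivlMr // ge_min invfM mulrA lexx.
Qed.

Lemma sqnorm_sps_sum_le (m k : nat) (Fv l : nat -> R) (g : nat -> 'rV[R]_d) :
  (forall j, l j <= Fv j) ->
  sqnorm (\sum_(m <= j < k) sps_step c gb (Fv j) (l j) (g j) *: g j)
    <= (k - m)%:R / c *
       \sum_(m <= j < k) sps_step c gb (Fv j) (l j) (g j) * (Fv j - l j).
Proof.
move=> l_le; apply: le_trans; first exact: sqnorm_sum_le.
rewrite -mulrA ler_wpM2l // mulr_sumr; apply: ler_sum => j _.
have -> : sqnorm (sps_step c gb (Fv j) (l j) (g j) *: g j)
    = sps_step c gb (Fv j) (l j) (g j) ^+ 2 * sqnorm (g j).
  by rewrite /sqnorm mulr_sumr; apply: eq_bigr => k' _; rewrite mxE exprMn.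
by rewrite [leRHS]mulrC; exact: sps_step_sq_le.
Qed.

End PolyakStep.

Definition round_start (tau t : nat) : nat := (t %/ tau * tau)%N.

Lemma not_dvdn_after_last_multiple (tau t k : nat) : (0 < tau)%N ->
  (round_start tau t < k <= t)%N -> ~~ (tau %| k)%N.
Proof.
move=> tau_gt0 /andP[lt_k le_kt]; apply/negP => /dvdnP[p def_k].
move: lt_k le_kt; rewrite /round_start def_k ltn_pmul2r // => lt_p.
by rewrite -leq_divRL // leqNgt lt_p.
Qed.

(* Length of the current round, measured against the SPS constant:
   since t - s < tau and 2 tau^2 <= c, (t - s)/c <= 1/(2 tau). *)
Lemma round_length_le (R : realFieldType) (c : R) (tau t : nat) :
  (0 < tau)%N -> 2 * tau%:R ^+ 2 <= c ->
  (t - round_start tau t)%:R / c <= (2 * tau%:R)^-1.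
Proof.
move=> tau_gt0 c_ge; have tau_pos : 0 < tau%:R :> R by rewrite ltr0n.
have c_gt0 : 0 < c by apply: lt_le_trans c_ge; rewrite mulr_gt0 ?exprn_gt0.
have le_len : (t - round_start tau t)%:R <= tau%:R :> R.
  by rewrite ler_nat /round_start {1}(divn_eq t tau) addKn ltnW // ltn_pmod.
rewrite ler_pdivrMr // (le_trans le_len) // -ler_pdivrMl ?invr_gt0 ?mulr_gt0 //.
by rewrite invrK -mulrA -expr2.
Qed.

Section Trajectory.
Context {R : realType} {d n : nat} {Omega : 'I_n -> Type}
  {F : forall i : 'I_n, 'rV[R]_d -> Omega i -> R}
  {lstar : 'I_n -> R} {c gb : R} {tau : nat} {x0 : 'rV[R]_d}
  {xi : nat -> forall i : 'I_n, Omega i}.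

Let x := fedsps F lstar c gb tau x0 xi.
Let gam := fedsps_gamma F lstar c gb tau x0 xi.
Let g (j : nat) (i : 'I_n) := fed_g F xi j i (x j i).

Lemma fedsps_sync (s : nat) : (tau %| s)%N -> forall i i', x s i = x s i'.
Proof. by case: s => [|s] s_sync i i' //=; rewrite /x /= s_sync. Qed.

Hypothesis tau_gt0 : (0 < tau)%N.

Lemma fedsps_local (t k : nat) (i : 'I_n) :
  let s := round_start tau t in (s <= k <= t)%N ->
  x k i = x s i - \sum_(s <= j < k) gam j i *: g j i.
Proof.
move=> s; elim: k => [|k IHk] /andP[le_sk le_kt].
  by rewrite leqn0 in le_sk; rewrite (eqP le_sk) big_geq // subr0.
have [lt_sk|] := ltnP s k.+1; last first.
  move=> le_ks; have -> : s = k.+1 by apply/eqP; rewrite eqn_leq le_sk.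
  by rewrite big_geq // subr0.
have local_step : ~~ (tau %| k.+1)%N.
  by apply: (not_dvdn_after_last_multiple _ t _ tau_gt0); rewrite le_kt andbT.
rewrite big_nat_recr //= opprD addrA -IHk; last by rewrite -ltnS lt_sk ltnW.
by rewrite /x /= (negbTE local_step).
Qed.

Hypotheses (c_gt0 : 0 < c) (gb_gt0 : 0 < gb)
  (lstar_le : forall j i y, lstar i <= F i y (xi j i)).

Lemma fedsps_gamma_ge0 (j : nat) (i : 'I_n) : 0 <= gam j i.
Proof. exact: sps_step_ge0. Qed.

Lemma fedsps_drift_le (t : nat) (i : 'I_n) :
  sqnorm (x (round_start tau t) i - x t i)
    <= (t - round_start tau t)%:R / c *
       \sum_(round_start tau t <= j < t) gam j i * (F i (x j i) (xi j i) - lstar i).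
Proof.
set s := round_start tau t.
rewrite (fedsps_local t t i) ?leq_divM ?leqnn // opprB addrC subrK.
exact: (sqnorm_sps_sum_le c_gt0 gb_gt0 s t (fun j => F i (x j i) (xi j i))
  (fun=> lstar i) (fun j => g j i) (fun j => lstar_le j i (x j i))).
Qed.

End Trajectory.

Theorem mainTheorem9 (R : realType) (d n : nat) (Omega : 'I_n -> Type)
  (supp : forall i : 'I_n, set (Omega i))
  (F : forall i : 'I_n, 'rV[R]_d -> Omega i -> R)
  (lstar : 'I_n -> R) (c gb : R) (tau : nat) (x0 : 'rV[R]_d)
  (xi : nat -> forall i : 'I_n, Omega i) :
  (0 < n)%N ->
  (0 < tau)%N ->
  0 < c -> 0 < gb ->
  (* F_i(., xi) differentiable for xi in supp(D_i) *)
  (forall (i : 'I_n) (z : Omega i), supp i z ->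
     forall x : 'rV[R]_d, differentiable (fun y => F i y z) x) ->
  (* l_i^* <= F_i^* = inf over supp(D_i) and x of F_i(x, xi) *)
  (forall (i : 'I_n) (z : Omega i) (x : 'rV[R]_d), supp i z -> lstar i <= F i x z) ->
  (* the samples are drawn from the supports *)
  (forall (t : nat) (i : 'I_n), supp i (xi t i)) ->
  2 * (tau%:R) ^+ 2 <= c ->
  forall t : nat,
    let s := (t %/ tau * tau)%N in
    let x := fedsps F lstar c gb tau x0 xi in
    let gam := fedsps_gamma F lstar c gb tau x0 xi in
    n%:R^-1 * \sum_(i < n) sqnorm (fedsps_avg F lstar c gb tau x0 xi t - x t i)
    <= (2 * n%:R * tau%:R)^-1 *
       \sum_(i < n) \sum_(s <= j < t) gam j i * (F i (x j i) (xi j i) - lstar i).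
Proof.
move=> n_gt0 tau_gt0 c_gt0 gb_gt0 _ lstar_le in_supp c_ge t; cbv zeta.
rewrite -/(round_start tau t); set s := round_start tau t.
set x := fedsps F lstar c gb tau x0 xi.
have lstar_le_F j i y : lstar i <= F i y (xi j i) := lstar_le i _ y (in_supp j i).
pose i0 := Ordinal n_gt0.
have x_sync i : x s i0 = x s i by apply: fedsps_sync; rewrite dvdn_mull.
have -> : (2 * n%:R * tau%:R)^-1 = n%:R^-1 * (2 * tau%:R)^-1 :> R.
  by rewrite -invfM; congr (_^-1); ring.
rewrite -mulrA ler_wpM2l ?invr_ge0 ?ler0n //.
apply: le_trans (sum_sqnorm_dev_mean_le _ (x t) (x s i0) n_gt0) _.
rewrite mulr_sumr; apply: ler_sum => i _; rewrite (x_sync i).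
apply: le_trans (fedsps_drift_le tau_gt0 c_gt0 gb_gt0 lstar_le_F t i) _.
rewrite ler_wpM2r ?round_length_le // sumr_ge0 // => j _.
by rewrite mulr_ge0 ?fedsps_gamma_ge0 // subr_ge0.
Qed.
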